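(* Let $q\ge2$ be a prime power and let $\mathcal{S}$ be a regular spread of lines in $\mathrm{PG}(3,q)$. Let $l_1,l_2,l_3$ be three lines of $\mathcal{S}$, let $\mathcal{R}$ be the unique regulus containing them, and let $l_4\in\mathcal{S}\setminus\mathcal{R}$. Then for every ordering $\{i_1,i_2,i_3,i_4\}=\{1,2,3,4\}$, the line $l_{i_4}$ can be obtained from $l_{i_1},l_{i_2},l_{i_3}$ by $(3,1)$-repair, i.e. there exist points $P_j\in l_{i_j}$ ($j=1,2,3$) with $l_{i_4}\subseteq\langle P_1,P_2,P_3\rangle$.
   Context: A spread of $\mathrm{PG}(3,q)$ is a set of $q^2+1$ pairwise skew lines partitioning the points. For three pairwise skew lines, the regulus they determine is the set of $q+1$ lines meeting every transversal line of the three (a transversal being a line meeting all three); a spread is regular if for any three of its lines, the regulus they determine is contained in the spread. *)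

(* Projective space PG(3,q) = PG(3,F) for a finite field F with
   #|F| = q. Subspaces of F^4 are represented by square matrices 'M[F]_4 via
   their row spaces (mxalgebra); projective lines are canonical representatives
   (<<L>>%MS = L) of 2-dimensional row spaces, so that equality of lines is
   Leibniz equality. Projective points are represented by nonzero row vectors. *)
From HB Require Import structures.
From mathcomp Require Import all_boot all_order all_algebra all_fingroup.
Set Implicit Arguments. Unset Strict Implicit. Unset Printing Implicit Defensive.
Import GRing.Theory.
Local Open Scope ring_scope.

Section PG3.
Variable F : finFieldType.

Definition is_line (L : 'M[F]_4) : bool := (\rank L == 2)%N && (<<L>>%MS == L).

Definition on_sub (p : 'rV[F]_4) (L : 'M[F]_4) : bool := (p != 0) && (p <= L)%MS.

Definition meets (A B : 'M[F]_4) : bool := ((A :&: B)%MS != 0).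

Definition skew (A B : 'M[F]_4) : bool := ~~ meets A B.

Definition is_spread (S : {set 'M[F]_4}) : Prop :=
  [/\ forall L, L \in S -> is_line L,
      #|S| = (#|F| ^ 2 + 1)%N,
      forall L M, L \in S -> M \in S -> L != M -> skew L M &
      forall p : 'rV[F]_4, p != 0 -> exists2 L, L \in S & (p <= L)%MS].

Definition transversal (l1 l2 l3 t : 'M[F]_4) : bool :=
  [&& is_line t, meets t l1, meets t l2 & meets t l3].

Definition regulus (l1 l2 l3 : 'M[F]_4) : {set 'M[F]_4} :=
  [set l | is_line l && [forall t, transversal l1 l2 l3 t ==> meets t l]].

Definition regular_spread (S : {set 'M[F]_4}) : Prop :=
  is_spread S /\
  forall l1 l2 l3, l1 \in S -> l2 \in S -> l3 \in S ->
    l1 != l2 -> l1 != l3 -> l2 != l3 -> regulus l1 l2 l3 \subset S.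

Definition repair31 (a b c l : 'M[F]_4) : Prop :=
  exists p1 p2 p3 : 'rV[F]_4,
    [/\ on_sub p1 a, on_sub p2 b, on_sub p3 c & (l <= p1 + p2 + p3)%MS].

End PG3.

From Pilot Require Import Defs.
From HB Require Import structures.
From mathcomp Require Import all_boot all_order all_algebra all_fingroup.
From mathcomp Require Import zify.
Set Implicit Arguments. Unset Strict Implicit. Unset Printing Implicit Defensive.
Local Open Scope ring_scope.

(* Whether every transversal of three of four pairwise skew lines meets the
   fourth does not depend on which line is singled out. To exchange d with c,
   take a transversal t of a, b, d and the transversal t' of a, b, c through
   the point t /\ a: t' meets d, and as a point of a lies on only one
   transversal of a, b, d, we get t' = t, so t meets c. Hence, if l_4 is not in
   the regulus of l_1, l_2, l_3, then for every ordering (a, b, c, d) of the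
   four lines some transversal t of a, b, c misses d. Let P = t /\ a and let
   Q, R be the points where the plane <d, P> meets b and c. If P, Q, R were
   collinear, their line would be the transversal through P, that is t, and t
   would meet d inside the plane <d, P>; hence <P, Q, R> is that plane and
   contains d. *)

Section Repair.
Variable F : finFieldType.
Local Notation M := 'M[F]_4.
Local Notation V := 'rV[F]_4.

Lemma meetsP (A B : M) :
  reflect (exists2 v : V, v != 0 & (v <= A)%MS && (v <= B)%MS) (meets A B).
Proof.
rewrite /meets; apply: (iffP rowV0Pn) => [[v vAB nz]|[v nz vAB]].
  by exists v; rewrite // -sub_capmx.
by exists v; rewrite // sub_capmx.
Qed.

Lemma meetsS (A A' B : M) : (A <= A')%MS -> meets A B -> meets A' B.
Proof.
move=> sAA' /meetsP[v nz /andP[vA vB]]; apply/meetsP; exists v => //.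
by rewrite (submx_trans vA sAA') vB.
Qed.

Lemma meets_mxrank_adds (A B : M) :
  (\rank (A + B) < \rank A + \rank B)%N -> meets A B.
Proof. by rewrite /meets -mxrank_eq0; have := mxrank_sum_cap A B; lia. Qed.

Lemma meets_mxrank_gt4 (A B : M) : (4 < \rank A + \rank B)%N -> meets A B.
Proof. by move=> gt4; apply: meets_mxrank_adds; have := rank_leq_col (A + B)%MS; lia. Qed.

Lemma mxrank_adds_skew (a b : M) m1 m2 (A : 'M_(m1, 4)) (B : 'M_(m2, 4)) :
  Defs.skew a b -> (A <= a)%MS -> (B <= b)%MS -> \rank (A + B) = (\rank A + \rank B)%N.
Proof.
rewrite /Defs.skew /meets negbK => /eqP ab0 sAa sBb.
have AB0 : (A :&: B <= (0 : M))%MS by rewrite -ab0 capmxS.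
by apply/eqP; rewrite (mxrank_adds_leqif A B) AB0.
Qed.

Lemma submx_mxrank_geq m1 m2 n (A : 'M[F]_(m1, n)) (B : 'M[F]_(m2, n)) :
  (A <= B)%MS -> (\rank B <= \rank A)%N -> (B <= A)%MS.
Proof. by move=> sAB leBA; rewrite -(mxrank_leqif_sup sAB).2 eqn_leq leBA mxrankS. Qed.

Lemma line_rank (L : M) : is_line L -> \rank L = 2%N.
Proof. by case/andP => /eqP. Qed.

Lemma line_sub_join (x y t : M) (P Y : V) :
  Defs.skew x y -> \rank t = 2%N -> P != 0 -> Y != 0 ->
  (P <= x)%MS -> (Y <= y)%MS -> (P <= t)%MS -> (Y <= t)%MS -> (t <= P + Y)%MS.
Proof.
move=> sxy rt nP nY Px Yy Pt Yt; apply: submx_mxrank_geq.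
  by rewrite addsmx_sub Pt Yt.
by rewrite (mxrank_adds_skew sxy Px Yy) !rank_rV nP nY rt.
Qed.

Lemma transversal_through_unique (x y z t t' : M) (P : V) :
  \rank y = 2%N -> \rank z = 2%N -> \rank t = 2%N -> \rank t' = 2%N ->
  Defs.skew x y -> Defs.skew x z -> Defs.skew y z ->
  P != 0 -> (P <= x)%MS -> (P <= t)%MS -> (P <= t')%MS ->
  meets t y -> meets t z -> meets t' y -> meets t' z -> (t' <= t)%MS.
Proof.
move=> ry rz rt rt' sxy sxz syz nP Px Pt Pt'.
move=> /meetsP[Y nY /andP[Yt Yy]] /meetsP[Z nZ /andP[Zt Zz]].
move=> /meetsP[Y' nY' /andP[Yt' Yy']] /meetsP[Z' nZ' /andP[Zt' Zz']].
have Pyz : (y + z <= z + (P + y))%MS.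
  by rewrite addsmx_sub addsmxSl andbT (submx_trans (addsmxSr P y)) ?addsmxSr.
have rPy : \rank (P + y) = 3%N by rewrite (mxrank_adds_skew sxy Px) ?rank_rV ?nP ?ry.
have rzPy : \rank (z + (P + y)) = 4%N.
  have := mxrankS Pyz; rewrite (mxrank_adds_skew syz (submx_refl y) (submx_refl z)) ry rz.
  by move=> ge4; apply/eqP; rewrite eqn_leq rank_leq_col.
(* t and t' both lie in the plane <P, y>, which meets z in a single point *)
set K := (z :&: (P + y))%MS.
have rK : \rank K = 1%N.
  have := mxrank_sum_cap z (P + y)%MS; rewrite rzPy rPy rz => sum5.
  by apply/eqP; rewrite -(eqn_add2l 4) sum5.
have in_K (s : M) (W S : V) : (S <= y)%MS -> (W <= z)%MS -> (W <= s)%MS ->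
    (s <= P + S)%MS -> (W <= K)%MS.
  move=> Sy Wz Ws sPS; rewrite sub_capmx Wz (submx_trans Ws) //.
  exact: submx_trans sPS (addsmxS (submx_refl P) Sy).
have tPY := line_sub_join sxy rt nP nY Px Yy Pt Yt.
have t'PY' := line_sub_join sxy rt' nP nY' Px Yy' Pt' Yt'.
have KZ : (K <= Z)%MS.
  by apply: submx_mxrank_geq (in_K _ _ _ Yy Zz Zt tPY) _; rewrite rK rank_rV nZ.
have Z't : (Z' <= t)%MS.
  exact: submx_trans (in_K _ _ _ Yy' Zz' Zt' t'PY') (submx_trans KZ Zt).
apply: submx_trans (line_sub_join sxz rt' nP nZ' Px Zz' Pt' Zt') _.
by rewrite addsmx_sub Pt Z't.
Qed.

Lemma exists_transversal_through (b c e : M) (P : V) :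
  \rank c = 2%N -> \rank e = 2%N -> Defs.skew b c -> Defs.skew b e ->
  P != 0 -> (P <= b)%MS ->
  exists2 t : M, (P <= t)%MS & Defs.transversal b c e t.
Proof.
move=> rc re sbc sbe nP Pb.
have rPc : \rank (P + c) = 3%N by rewrite (mxrank_adds_skew sbc Pb) ?rank_rV ?nP ?rc.
have /meetsP[Z nZ /andP[Ze ZPc]] : meets e (P + c)%MS.
  by apply: meets_mxrank_gt4; rewrite re rPc.
set t0 := (P + Z)%MS.
have rt0 : \rank t0 = 2%N by rewrite (mxrank_adds_skew sbe Pb Ze) !rank_rV nP nZ.
have t0c : meets t0 c.
  apply: meets_mxrank_adds; rewrite rt0 rc.
  apply: (@leq_ltn_trans (\rank (P + c))); last by rewrite rPc.
  by apply: mxrankS; rewrite !addsmx_sub addsmxSl ZPc addsmxSr.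
have t0_gen : (t0 <= <<t0>>)%MS by rewrite genmxE.
exists <<t0>>%MS; first exact: submx_trans (addsmxSl P Z) t0_gen.
rewrite /Defs.transversal /is_line genmx_id eqxx andbT genmxE rt0 (meetsS t0_gen t0c) /=.
apply/andP; split; apply: meetsS t0_gen _; apply/meetsP.
  by exists P; rewrite // addsmxSl.
by exists Z; rewrite // addsmxSr.
Qed.

Definition transversals_meet (a b c d : M) : Prop :=
  forall t, Defs.transversal a b c t -> meets t d.

Lemma regulusP (a b c d : M) :
  reflect (is_line d /\ transversals_meet a b c d) (d \in regulus a b c).
Proof.
rewrite inE; apply: (iffP andP) => -[ld tm]; split=> //.
  by move=> t; move/forallP: tm => /(_ t)/implyP.
by apply/forallP => t; apply/implyP/tm.
Qed.

Lemma transversals_meet_exchange (a b c d : M) :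
  \rank b = 2%N -> \rank c = 2%N -> \rank d = 2%N ->
  Defs.skew a b -> Defs.skew a c -> Defs.skew a d -> Defs.skew b d ->
  transversals_meet a b c d -> transversals_meet a b d c.
Proof.
move=> rb rc rd sab sac sad sbd tm t /and4P[lt /meetsP[P nP /andP[Pt Pa]] mtb mtd].
have [t' Pt' tr'] := exists_transversal_through rb rc sab sac nP Pa.
have /and4P[lt' _ mt'b mt'c] := tr'.
apply: meetsS mt'c.
exact: transversal_through_unique rb rd (line_rank lt) (line_rank lt') sab sad sbd
  nP Pa Pt Pt' mtb mtd mt'b (tm t' tr').
Qed.

Lemma repair31_of_transversal (a b c d t : M) :
  \rank b = 2%N -> \rank c = 2%N -> \rank d = 2%N ->
  Defs.skew d a -> Defs.skew a b -> Defs.skew a c -> Defs.skew b c ->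
  Defs.transversal a b c t -> ~~ meets t d -> repair31 a b c d.
Proof.
move=> rb rc rd sda sab sac sbc /and4P[lt /meetsP[P nP /andP[Pt Pa]] mtb mtc] ntd.
set pi := (d + P)%MS.
have rpi : \rank pi = 3%N by rewrite (mxrank_adds_skew sda (submx_refl d) Pa) rd rank_rV nP.
have /meetsP[Q nQ /andP[Qb Qpi]] : meets b pi by apply: meets_mxrank_gt4; rewrite rb rpi.
have /meetsP[R nR /andP[Rc Rpi]] : meets c pi by apply: meets_mxrank_gt4; rewrite rc rpi.
set m := (P + Q + R)%MS.
have mpi : (m <= pi)%MS by rewrite !addsmx_sub Qpi Rpi addsmxSr.
have PQm : (P + Q <= m)%MS := addsmxSl _ _.
have rPQ : \rank (P + Q) = 2%N by rewrite (mxrank_adds_skew sab Pa Qb) !rank_rV nP nQ.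
have rm3 : (3 <= \rank m)%N.
  rewrite ltnNge; apply: contra ntd => rm2.
  have rm : \rank m = 2%N.
    by have := mxrankS PQm; rewrite rPQ => ge2; apply/eqP; rewrite eqn_leq rm2 ge2.
  have Pm : (P <= m)%MS := submx_trans (addsmxSl P Q) PQm.
  have mb : meets m b by apply/meetsP; exists Q; rewrite // Qb (submx_trans (addsmxSr P Q)).
  have mc : meets m c by apply/meetsP; exists R; rewrite // Rc addsmxSr.
  have tm := transversal_through_unique rb rc rm (line_rank lt) sab sac sbc
    nP Pa Pm Pt mb mc mtb mtc.
  apply: meets_mxrank_adds; rewrite (line_rank lt) rd.
  apply: (@leq_ltn_trans (\rank pi)); last by rewrite rpi.
  by apply: mxrankS; rewrite addsmx_sub (submx_trans tm mpi) addsmxSl.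
exists P, Q, R; split; rewrite /on_sub ?nP ?Pa ?nQ ?Qb ?nR ?Rc //.
apply: submx_trans (addsmxSl d P) _; apply: submx_mxrank_geq mpi _.
by rewrite rpi.
Qed.

Lemma repair31_of_not_transversals_meet (a b c d : M) :
  \rank b = 2%N -> \rank c = 2%N -> \rank d = 2%N ->
  Defs.skew d a -> Defs.skew a b -> Defs.skew a c -> Defs.skew b c ->
  ~ transversals_meet a b c d -> repair31 a b c d.
Proof.
move=> rb rc rd sda sab sac sbc ntm.
have [/existsP[t /andP[tr ntd]]|] :=
  boolP [exists t, Defs.transversal a b c t && ~~ meets t d].
  exact: repair31_of_transversal tr ntd.
move/existsPn => H; case: ntm => t tr.
by move: (H t); rewrite tr negbK.
Qed.

Lemma ord4P (i : 'I_4) : [\/ i = 0, i = 1, i = 2 | i = 3].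
Proof.
by case: i => [[|[|[|[|//]]]] p];
  [constructor 1|constructor 2|constructor 3|constructor 4]; apply: val_inj.
Qed.

(* Indexing the four lines lets permutations act by composition. *)
Definition transversals_meet_at (f : 'I_4 -> M) (i : 'I_4) : Prop :=
  forall t, is_line t -> (forall j, j != i -> meets t (f j)) -> meets t (f i).

Lemma transversals_meet_at3 (f : 'I_4 -> M) :
  transversals_meet_at f 3 <-> transversals_meet (f 0) (f 1) (f 2) (f 3).
Proof.
split=> tm t.
  by case/and4P=> lt m0 m1 m2; apply: tm => // j; case/ord4P: (j) => ->.
by move=> lt mt; apply: tm; rewrite /Defs.transversal lt !mt.
Qed.

Lemma transversals_meet_at_perm (f : 'I_4 -> M) (s : 'S_4) i :
  transversals_meet_at (f \o s) i <-> transversals_meet_at f (s i).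
Proof.
have eq_s j : (s j != s i) = (j != i) by rewrite (inj_eq perm_inj).
split=> tm t lt mt.
  by apply: (tm t lt) => j; rewrite -eq_s; apply: mt.
apply: tm => // j; rewrite -(permKV s j) eq_s; exact: mt.
Qed.

Definition skew_lines4 (f : 'I_4 -> M) : Prop :=
  (forall i, \rank (f i) = 2%N) /\ (forall i j, i != j -> Defs.skew (f i) (f j)).

Lemma skew_lines4_perm (f : 'I_4 -> M) (s : 'S_4) :
  skew_lines4 f -> skew_lines4 (f \o s).
Proof.
by case=> rf sf; split=> [i|i j ij]; [apply: rf | apply: sf; rewrite (inj_eq perm_inj)].
Qed.

Lemma transversals_meet_at_exchange (f : 'I_4 -> M) :
  skew_lines4 f -> transversals_meet_at f 3 -> transversals_meet_at f 2.
Proof.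
move=> [rf sf] /transversals_meet_at3 tm3.
have tm2 : transversals_meet (f 0) (f 1) (f 3) (f 2).
  by apply: transversals_meet_exchange; rewrite ?rf ?sf.
by move=> t lt mt; apply: tm2; rewrite /Defs.transversal lt !mt.
Qed.

Lemma transversals_meet_at_from3 (f : 'I_4 -> M) i :
  skew_lines4 f -> transversals_meet_at f 3 -> transversals_meet_at f i.
Proof.
move=> f4 tm3; have [->|i3] := eqVneq i 3; first by [].
pose s := tperm i 2.
have tms3 : transversals_meet_at (f \o s) 3.
  by apply/transversals_meet_at_perm; rewrite tpermD.
have := transversals_meet_at_exchange (skew_lines4_perm s f4) tms3.
move/transversals_meet_at_perm.
by rewrite tpermR.
Qed.

Lemma transversals_meet_at_move (f : 'I_4 -> M) k i :
  skew_lines4 f -> transversals_meet_at f k -> transversals_meet_at f i.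
Proof.
move=> f4 tmk; pose s := tperm k 3.
have tms3 : transversals_meet_at (f \o s) 3.
  by apply/transversals_meet_at_perm; rewrite tpermR.
have := transversals_meet_at_from3 (i := s i) (skew_lines4_perm s f4) tms3.
move/transversals_meet_at_perm.
by rewrite tpermK.
Qed.

End Repair.

Theorem mainTheorem3 (F : finFieldType) (S : {set 'M[F]_4})
    (l1 l2 l3 l4 : 'M[F]_4) :
  regular_spread S ->
  l1 \in S -> l2 \in S -> l3 \in S ->
  l1 != l2 -> l1 != l3 -> l2 != l3 ->
  l4 \in S -> l4 \notin regulus l1 l2 l3 ->
  forall s : 'S_4,
    let l := tnth [tuple l1; l2; l3; l4] in
    repair31 (l (s 0)) (l (s 1)) (l (s 2)) (l (s 3)).
Proof.
move=> [[lineS _ skewS _] _] h1 h2 h3 n12 n13 n23 h4 nreg s l.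
have lS i : l i \in S.
  have := mem_tnth i [tuple l1; l2; l3; l4].
  by rewrite /l !inE => /or4P[]/eqP->.
have old_neq_l4 x : x \in [:: l1; l2; l3] -> x != l4.
  move=> x123; apply: contraNneq nreg => <-; apply/regulusP; split.
    by apply: lineS; move: x123; rewrite !inE => /or3P[]/eqP->.
  by move: x123; rewrite !inE => /or3P[]/eqP-> t /and4P[].
have l_inj : injective l.
  apply/tuple_uniqP; rewrite /= !inE !negb_or n12 n13 n23.
  by rewrite !old_neq_l4 // !inE eqxx ?orbT.
have l_skew4 : skew_lines4 l.
  split=> [i|i j ij]; first exact/line_rank/lineS/lS.
  by apply: skewS; rewrite ?lS ?(inj_eq l_inj).
have [rank_ls skew_ls] := skew_lines4_perm s l_skew4.
pose ls := l \o s; change (repair31 (ls 0) (ls 1) (ls 2) (ls 3)).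
apply: repair31_of_not_transversals_meet; rewrite ?rank_ls ?skew_ls //.
move/transversals_meet_at3/transversals_meet_at_perm.
move/(transversals_meet_at_move (i := 3) l_skew4)/transversals_meet_at3 => tm.
by case/negP: nreg; apply/regulusP; split; [apply/lineS | apply: tm].
Qed.
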